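(* Let $(x,y)$ be a random pair satisfying the linear-model assumption and the irrepresentable condition $\mu_{S^*}<1$ described in the context. Then for every $S\subseteq S^*$, $$\max_{j\notin S^*}|Z_j^S|\le \mu_{S^*}\max_{i\in S^*\setminus S}|Z_i^S|,$$ with the convention $\max\emptyset=0$.
   Context: $(x,y)$ is a random pair with $x\in\mathbb{R}^d$, $y\in\mathbb{R}$, both square integrable. Linear-model assumption: $\mathbb{E}[x]=0$, $y=\langle\beta^*,x\rangle+\epsilon$ for some $\beta^*\in\mathbb{R}^d$, with $\mathbb{E}[\epsilon\mid x]=0$. Let $S^*=\{i:\beta^*_i\neq 0\}$, $s^*=|S^*|$, $\Sigma$ the covariance matrix of $x$, and for $F\subseteq[d]$ let $\Sigma_F$ be the submatrix with rows and columns in $F$, $x_F$ the subvector of $x$ indexed by $F$, and $\mathrm{Cov}(x_F,x_j)\in\mathbb{R}^{|F|}$ the vector of covariances $\mathrm{Cov}(x_i,x_j)$, $i\in F$. Define $\mu_F=\max_{j\in[d]\setminus F}\|\Sigma_F^{-1}\mathrm{Cov}(x_F,x_j)\|_1$ (when $\Sigma_F$ is invertible). Irrepresentable condition: for all $F\subseteq[d]$ with $|F|=s^*$, $\Sigma_F$ is invertible and $0\le\mu_F<1$. Let $\mathcal{R}(\beta)=\mathbb{E}[(y-\langle x,\beta\rangle)^2]$, and for $S\subseteq S^*$ let $\beta^S\in\arg\min_{\mathrm{supp}(\beta)\subseteq S}\mathcal{R}(\beta)$. Define $Z_i^S=\mathbb{E}[x_i(y-\langle x,\beta^S\rangle)]$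 for $i\in[d]$. *)

From HB Require Import structures.
From mathcomp Require Import all_boot all_order all_algebra.
From mathcomp Require Import all_classical all_reals all_analysis.
Set Implicit Arguments. Unset Strict Implicit. Unset Printing Implicit Defensive.
Import Order.TTheory GRing.Theory Num.Theory.
Local Open Scope classical_set_scope.
Local Open Scope ring_scope.

Section lm.
Context (dT : measure_display) (T : measurableType dT) (R : realType)
  (P : probability T R) (d : nat).
Implicit Types (x : 'I_d -> T -> R) (y eps : T -> R) (b : 'I_d -> R)
  (F S : {set 'I_d}).

Definition dotx b x : T -> R := fun w => \sum_(i < d) b i * x i w.

Definition risk x y b : \bar R := 'E_P[fun w => (y w - dotx b x w) ^+ 2].

Definition Zcoef x y b (i : 'I_d) : R :=
  fine 'E_P[fun w => x i w * (y w - dotx b x w)].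

Definition supp b : {set 'I_d} := [set i | b i != 0].

Definition gen_sigma_x x : set_system T :=
  [set A | exists i : 'I_d, exists B : set R, measurable B /\ A = x i @^-1` B].

(* E[eps | x] = 0 : the integral of eps over every A in sigma(x) vanishes
   (eps integrable) *)
Definition cond_exp_zero x eps : Prop :=
  P.-integrable setT (fun w => (eps w)%:E) /\
  forall A, <<s gen_sigma_x x >> A -> (\int[P]_(w in A) (eps w)%:E)%E = 0%E.

Definition SigmaF x F : 'M[R]_#|F| :=
  \matrix_(i, j) fine (covariance P (x (enum_val i)) (x (enum_val j))).

Definition covF x F (j : 'I_d) : 'cV[R]_#|F| :=
  \col_i fine (covariance P (x (enum_val i)) (x j)).

Definition muF x F : R :=
  \big[Num.max/0]_(j | j \notin F)
     \sum_(k < #|F|) `|(invmx (SigmaF x F) *m covF x F j) k ord0|.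

Definition irrepresentable x (s : nat) : Prop :=
  forall F, #|F| = s -> SigmaF x F \in unitmx /\ 0 <= muF x F < 1.

End lm.

From HB Require Import structures.
From mathcomp Require Import all_boot all_order all_algebra.
From mathcomp Require Import all_classical all_reals all_analysis.
From mathcomp Require Import measurable_realfun.
From mathcomp Require Import ring lra.
Import Order.TTheory GRing.Theory Num.Theory.
Local Open Scope classical_set_scope.
Local Open Scope ring_scope.
Set Implicit Arguments. Unset Strict Implicit. Unset Printing Implicit Defensive.

(* Write v = beta^* - beta^S.  Under the linear model the residual is
   y - <x, beta^S> = eps + <v, x>, and E[x_j eps] = 0 because E[eps | x] = 0,
   so Z_j^S = Cov(x_j, x) v for every j.  Both beta^* and beta^S vanish off
   F = S^*, hence the vector z = (Z_i^S)_(i in F) equals Sigma_F v_F, and since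
   Sigma_F is symmetric and invertible, Z_j^S = <Sigma_F^-1 Cov(x_F, x_j), z>.
   Optimality of beta^S along each coordinate of S gives Z_i^S = 0 for i in S,
   so |z_i| <= max_(i in S^* \ S) |Z_i^S| and the l1/l-infinity inequality
   concludes. *)

Section expectation.
Context (dT : measure_display) (T : measurableType dT) (R : realType)
  (P : probability T R).

Definition Int (h : T -> R) := P.-integrable setT (EFin \o h).
Definition Ef (h : T -> R) : R := fine (\int[P]_w (h w)%:E)%E.

Lemma EfE (h : T -> R) : fine 'E_P[h] = Ef h.
Proof. by rewrite unlock. Qed.

Lemma IntD (f h : T -> R) : Int f -> Int h -> Int (fun w => f w + h w).
Proof.
move=> If Ih; rewrite /Int.
have -> : EFin \o (fun w => f w + h w) = (EFin \o f) \+ (EFin \o h).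
  by apply/funext => w /=; rewrite EFinD.
exact: integrableD.
Qed.

Lemma IntZ c (f : T -> R) : Int f -> Int (fun w => c * f w).
Proof.
move=> If; rewrite /Int.
have -> : EFin \o (fun w => c * f w) = (fun w => c%:E * (EFin \o f) w)%E.
  by apply/funext => w /=; rewrite EFinM.
exact: integrableZl.
Qed.

Lemma Int_sum (I : Type) (s : seq I) (F : I -> T -> R) :
  (forall i, Int (F i)) -> Int (fun w => \sum_(i <- s) F i w).
Proof.
move=> IF; elim: s => [|i s ih].
  rewrite /Int (_ : EFin \o _ = cst 0%E); first exact: integrable0.
  by apply/funext => w /=; rewrite big_nil.
rewrite (_ : (fun w => _) = (fun w => F i w + \sum_(j <- s) F j w)).
  exact: IntD.
by apply/funext => w; rewrite big_cons.
Qed.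

Lemma EfD (f h : T -> R) : Int f -> Int h ->
  Ef (fun w => f w + h w) = Ef f + Ef h.
Proof.
move=> If Ih; rewrite /Ef.
under eq_integral do rewrite EFinD.
by rewrite (integralD_EFin measurableT If Ih) fineD // integrable_fin_num.
Qed.

Lemma EfZ c (f : T -> R) : Int f -> Ef (fun w => c * f w) = c * Ef f.
Proof.
move=> If; rewrite /Ef.
under eq_integral do rewrite EFinM.
by rewrite (integralZl measurableT If) fineM // integrable_fin_num.
Qed.

Lemma Ef_sum (I : Type) (s : seq I) (F : I -> T -> R) :
  (forall i, Int (F i)) ->
  Ef (fun w => \sum_(i <- s) F i w) = \sum_(i <- s) Ef (F i).
Proof.
move=> IF; elim: s => [|i s ih].
  rewrite big_nil /Ef; under eq_integral do rewrite big_nil.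
  by rewrite integral0.
rewrite big_cons -ih -EfD //; last exact: Int_sum.
by congr Ef; apply/funext => w; rewrite big_cons.
Qed.

Lemma Ef_ge0 (h : T -> R) : (forall w, 0 <= h w) -> 0 <= Ef h.
Proof.
by move=> h0; rewrite /Ef fine_ge0 // integral_ge0 // => w _; rewrite lee_fin.
Qed.

Lemma L2_measurable (h : T -> R) : h \in Lfun P 2%:E -> measurable_fun setT h.
Proof. by move=> /sub_Lfun_mfun; rewrite inE. Qed.

Lemma L2_L1 (h : T -> R) : h \in Lfun P 2%:E -> h \in Lfun P 1.
Proof. by apply: Lfun_subset12; exact: fin_num_measure. Qed.

Lemma L2_mul_Int (f h : T -> R) : f \in Lfun P 2%:E -> h \in Lfun P 2%:E ->
  Int (fun w => f w * h w).
Proof. by move=> f2 h2; apply/Lfun1_integrable; exact: Lfun2_mul_Lfun1. Qed.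

Lemma L2_sum (I : Type) (s : seq I) (F : I -> T -> R) :
  (forall i, F i \in Lfun P 2%:E) -> \sum_(i <- s) F i \in Lfun P 2%:E.
Proof.
move=> F2; elim: s => [|i s ih].
  by rewrite big_nil; exact: (Lfun_cst P 0 2).
by rewrite big_cons rpredD ?lee1n.
Qed.

Lemma L2B (f h : T -> R) : f \in Lfun P 2%:E -> h \in Lfun P 2%:E ->
  f \- h \in Lfun P 2%:E.
Proof. by move=> ? ?; rewrite rpredB ?lee1n. Qed.

End expectation.

Section orthogonality.
Context (dT : measure_display) (T : measurableType dT) (R : realType)
  (P : probability T R).

Definition null_mean (h : T -> R) :=
  Int P h /\ (\int[P]_w (h w)%:E = 0)%E.

Lemma null_meanD (f h : T -> R) :
  null_mean f -> null_mean h -> null_mean (fun w => f w + h w).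
Proof.
move=> [If f0] [Ih h0]; split; first exact: IntD.
under eq_integral do rewrite EFinD.
by rewrite (integralD_EFin measurableT If Ih) f0 h0 adde0.
Qed.

Lemma null_meanZ c (f : T -> R) : null_mean f -> null_mean (fun w => c * f w).
Proof.
move=> [If f0]; split; first exact: IntZ.
under eq_integral do rewrite EFinM.
by rewrite (integralZl measurableT If) f0 mule0.
Qed.

Lemma null_mean_sum (I : Type) (s : seq I) (F : I -> T -> R) :
  (forall i, null_mean (F i)) -> null_mean (fun w => \sum_(i <- s) F i w).
Proof.
move=> F0; elim: s => [|i s ih].
  have -> : (fun w => \sum_(i <- [::]) F i w) = (fun=> 0).
    by apply/funext => w; rewrite big_nil.
  by split; [exact: integrable0 | exact: integral0].
have -> : (fun w => \sum_(j <- i :: s) F j w) =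
          (fun w => F i w + \sum_(j <- s) F j w).
  by apply/funext => w; rewrite big_cons.
exact: null_meanD.
Qed.

Lemma approx_ge0 (f : T -> \bar R) n w : 0 <= approx setT f n w.
Proof.
rewrite /approx; apply: addr_ge0.
  apply: sumr_ge0 => k _; apply: mulr_ge0; first exact: mulr_ge0.
  by rewrite indicE; case: (_ \in _).
by apply: mulr_ge0 => //; rewrite indicE; case: (_ \in _).
Qed.

Section events.
Variables (g eps : T -> R).
Hypotheses (mg : measurable_fun setT g) (meps : measurable_fun setT eps)
  (Ieps : Int P eps).
Hypothesis eps_events : forall B : set R, measurable B ->
  (\int[P]_(w in g @^-1` B) (eps w)%:E = 0)%E.

Lemma null_mean_indic (B : set R) : measurable B ->
  null_mean (fun w => eps w * \1_(g @^-1` B) w).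
Proof.
move=> mB.
have mA : measurable (g @^-1` B) by rewrite -(setTI (g @^-1` B)); exact: mg.
split.
  apply: le_integrable Ieps => //.
    apply/measurable_EFinP; apply: measurable_funM; first exact: meps.
    exact: measurable_indic mA.
  move=> w _ /=; rewrite lee_fin normrM indicE.
  by case: (_ \in _); rewrite ?normr1 ?normr0 ?mulr1 ?mulr0.
rewrite -(eps_events mB) [RHS]integral_mkcond; apply: eq_integral => w _.
by rewrite /patch indicE; case: (_ \in _) => /=; rewrite ?mulr1 ?mulr0.
Qed.

Lemma dyadic_approx_preimage (phi : R -> R) n k : measurable_fun setT phi ->
  exists2 B, measurable B &
    dyadic_approx setT (EFin \o (phi \o g)) n k = g @^-1` B.
Proof.
move=> mphi; have mEphi : measurable_fun setT (EFin \o phi).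
  exact/measurable_EFinP.
rewrite /dyadic_approx; case: ifP => _; last first.
  by exists set0; [exact: measurable0 | rewrite preimage_set0].
exists ((EFin \o phi) @^-1` (EFin @` [set` dyadic_itv R n k])).
  rewrite -[X in measurable X]setTI; apply: mEphi => //.
  by apply: measurable_image_EFin; exact: measurable_itv.
by rewrite setTI; apply/seteqP; split => w /=; rewrite in_setE.
Qed.

Lemma integer_approx_preimage (phi : R -> R) n : measurable_fun setT phi ->
  exists2 B, measurable B &
    integer_approx setT (EFin \o (phi \o g)) n = g @^-1` B.
Proof.
move=> mphi; have mEphi : measurable_fun setT (EFin \o phi).
  exact/measurable_EFinP.
exists [set r : R | (n%:R%:E <= (phi r)%:E)%E].
  by rewrite -[X in measurable X]setTI; apply: measurable_lee.
by rewrite /integer_approx setTI.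
Qed.

Lemma null_mean_approx (phi : R -> R) n : measurable_fun setT phi ->
  null_mean (fun w => eps w * approx setT (EFin \o (phi \o g)) n w).
Proof.
move=> mphi; set f := EFin \o (phi \o g).
have -> : (fun w => eps w * approx setT f n w) = (fun w =>
    \sum_(k < n * 2 ^ n)
      (k%:R * 2 ^- n) * (eps w * \1_(dyadic_approx setT f n k) w)
    + n%:R * (eps w * \1_(integer_approx setT f n) w)).
  apply/funext => w; rewrite /approx mulrDr mulr_sumr.
  by congr (_ + _); [apply: eq_bigr => k _|]; rewrite mulrCA.
apply: null_meanD.
  apply: null_mean_sum => k; apply: null_meanZ.
  by have [B mB ->] := dyadic_approx_preimage n k mphi; exact: null_mean_indic.
apply: null_meanZ.
by have [B mB ->] := integer_approx_preimage n mphi; exact: null_mean_indic.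
Qed.

Hypothesis Ieps_g : Int P (fun w => eps w * g w).

Lemma Int_mul_funrpos : Int P (fun w => eps w * g^\+ w).
Proof.
apply: le_integrable Ieps_g => //.
  apply/measurable_EFinP; apply: measurable_funM => //.
  exact: measurable_funrpos.
move=> w _ /=; rewrite lee_fin !normrM ler_wpM2l // ger0_norm ?funrpos_ge0 //.
by rewrite /funrpos ge_max normr_ge0 ler_norm.
Qed.

(* E[eps g^+] = 0: approximate g^+ from below by simple functions of g and
   pass to the limit by dominated convergence (dominated by |eps g|) *)
Lemma mean_mul_funrpos : (\int[P]_w (eps w * g^\+ w)%:E = 0)%E.
Proof.
pose f := EFin \o g^\+.
have f_ge0 w : setT w -> (0 <= f w)%E by move=> _; rewrite lee_fin funrpos_ge0.
have mean0 n : null_mean (fun w => eps w * approx setT f n w).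
  by apply: (null_mean_approx (phi := fun r => Num.max r 0)); exact: measurable_maxr.
have cvg_mean : (fun n => \int[P]_(w in setT) (eps w * approx setT f n w)%:E)%E
    @ \oo --> (\int[P]_(w in setT) (eps w * g^\+ w)%:E)%E.
  apply: (@dominated_cvg _ _ _ P setT measurableT
    (fun n w => (eps w * approx setT f n w)%:E)
    (fun w => (eps w * g^\+ w)%:E) (fun w => (`|eps w * g w|)%:E)).
  - by move=> n; exact: measurable_int (mean0 n).1.
  - move=> w _; apply: cvg_EFin; first exact: nearW.
    have := @cvg_approx _ _ _ setT f w f_ge0 I (ltry _).
    by move=> /(cvgMl_tmp (a := eps w)).
  - by [].
  - by have := integrable_abse Ieps_g; apply: eq_integrable => // w _ /=.
  - move=> n w _; rewrite /= lee_fin !normrM ler_wpM2l //.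
    rewrite ger0_norm ?approx_ge0 //.
    have := @le_approx _ _ _ setT f n w f_ge0 I; rewrite lee_fin => /le_trans.
    by apply; rewrite /funrpos ge_max normr_ge0 ler_norm.
have mean_eq0 : (fun n => \int[P]_(w in setT) (eps w * approx setT f n w)%:E)%E =
    cst 0%E by apply/funext => n; exact: (mean0 n).2.
rewrite mean_eq0 in cvg_mean.
exact: (@cvg_unique _ (@ereal_hausdorff R) _ _ _ _ cvg_mean (cvg_cst 0%E)).
Qed.

End events.

Lemma orthogonal_to_events (g eps : T -> R) :
  measurable_fun setT g -> measurable_fun setT eps -> Int P eps ->
  (forall B : set R, measurable B ->
    (\int[P]_(w in g @^-1` B) (eps w)%:E = 0)%E) ->
  Int P (fun w => eps w * g w) ->
  Ef P (fun w => eps w * g w) = 0.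
Proof.
move=> mg meps Ieps events Ieg.
have mNg : measurable_fun setT (\- g) by exact: measurable_funN.
have INeg : Int P (fun w => eps w * (\- g) w).
  rewrite (_ : (fun w => _) = fun w => -1 * (eps w * g w)); first exact: IntZ.
  by apply/funext => w /=; rewrite mulrN mulN1r.
have Nevents (B : set R) : measurable B ->
    (\int[P]_(w in (fun w => - g w)%R @^-1` B) (eps w)%:E = 0)%E.
  move=> mB; have mNB : measurable (-%R @^-1` B).
    by rewrite -[X in measurable X]setTI; exact: oppr_measurable.
  exact: events mNB.
have pos := mean_mul_funrpos mg meps Ieps events Ieg.
have neg := mean_mul_funrpos mNg meps Ieps Nevents INeg.
have Ipos := Int_mul_funrpos mg meps Ieg.
have := Int_mul_funrpos mNg meps INeg; rewrite funrposN => Ineg.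
rewrite funrposN in neg.
have gE w : g^\+ w - g^\- w = g w := congr1 (fun h => h w) (funrposBneg g).
rewrite /Ef (eq_integral (fun w => (eps w * g^\+ w)%:E - (eps w * g^\- w)%:E))%E.
  by rewrite (integralB_EFin measurableT Ipos Ineg) pos neg sube0.
by move=> w _; rewrite -EFinB -mulrBr gE.
Qed.

End orthogonality.

Section algebra.
Variable R : realFieldType.

Lemma linear_le_quadratic_eq0 (Z q : R) :
  0 <= q -> (forall t, 2 * t * Z <= t ^+ 2 * q) -> Z = 0.
Proof.
move=> q_ge0 dom; pose t := Z / (q + 1).
have q1 : q + 1 != 0 by rewrite gt_eqF // ltr_wpDl.
have Zt : Z = t * (q + 1) by rewrite /t divfK.
have ht : t ^+ 2 * (q + 2) <= 0.
  by have := dom t; rewrite [in X in X -> _]Zt => h; nra.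
have t0 : t = 0.
  apply/eqP; rewrite -sqrf_eq0 eq_le sqr_ge0 andbT.
  by rewrite -(pmulr_lle0 _ (_ : 0 < q + 2)) ?ltr_wpDl.
by rewrite Zt t0 mul0r.
Qed.

Lemma sym_dual_repr n (A : 'M[R]_n) (c v : 'cV[R]_n) :
  A^T = A -> A \in unitmx -> c^T *m v = (invmx A *m c)^T *m (A *m v).
Proof.
move=> symA unitA; rewrite trmx_mul trmx_inv symA mulmxA.
by rewrite -(mulmxA c^T) mulVmx // mulmx1.
Qed.

Lemma abs_dot_le_l1_max n (a z : 'I_n -> R) (M : R) :
  (forall k, `|z k| <= M) -> `|\sum_k a k * z k| <= (\sum_k `|a k|) * M.
Proof.
move=> zM; rewrite mulr_suml; apply: le_trans (ler_norm_sum _ _ _) _.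
by apply: ler_sum => k _; rewrite normrM ler_wpM2l.
Qed.

End algebra.

Section linear_model.
Context (dT : measure_display) (T : measurableType dT) (R : realType)
  (P : probability T R) (d : nat) (x : 'I_d -> T -> R) (y : T -> R)
  (bstar : 'I_d -> R) (eps : T -> R).
Hypotheses (x_L2 : forall i, x i \in Lfun P 2%:E) (y_L2 : y \in Lfun P 2%:E)
  (x_centered : forall i, ('E_P[x i])%E = 0%E)
  (y_model : forall w, y w = dotx bstar x w + eps w)
  (eps_cond : cond_exp_zero P x eps).

Lemma dotx_L2 (c : 'I_d -> R) : dotx c x \in Lfun P 2%:E.
Proof.
rewrite (_ : dotx c x = \sum_(i < d) (c i \o* x i)).
  by apply: L2_sum => i; apply: Lfun_scale; [rewrite ler1n | exact: x_L2].
apply/funext => w; rewrite fct_sumE /dotx /=.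
by apply: eq_bigr => i _; rewrite mulrC.
Qed.

Lemma residual_L2 (c : 'I_d -> R) : y \- dotx c x \in Lfun P 2%:E.
Proof. exact: L2B y_L2 (dotx_L2 c). Qed.

Lemma eps_L2 : eps \in Lfun P 2%:E.
Proof.
rewrite (_ : eps = y \- dotx bstar x); first exact: residual_L2.
by apply/funext => w /=; rewrite y_model; ring.
Qed.

Lemma x_eps_orth (j : 'I_d) : Ef P (fun w => x j w * eps w) = 0.
Proof.
rewrite (_ : (fun w => _) = fun w => eps w * x j w); last first.
  by apply/funext => w; rewrite mulrC.
apply: orthogonal_to_events (L2_measurable (x_L2 j)) (L2_measurable eps_L2)
  eps_cond.1 _ (L2_mul_Int eps_L2 (x_L2 j)).
by move=> B mB; apply: eps_cond.2; apply: sub_gen_smallest; exists j, B.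
Qed.

Lemma cov_x (i j : 'I_d) :
  fine (covariance P (x i) (x j)) = Ef P (fun w => x i w * x j w).
Proof.
rewrite covarianceE; last exact: Lfun2_mul_Lfun1; last exact: L2_L1;
  last exact: L2_L1.
by rewrite !x_centered mul0e sube0 EfE.
Qed.

Lemma Zcoef_cov (b : 'I_d -> R) (j : 'I_d) : Zcoef P x y b j =
  \sum_(k < d) (bstar k - b k) * fine (covariance P (x j) (x k)).
Proof.
rewrite /Zcoef EfE.
transitivity (Ef P (fun w => x j w * eps w +
    \sum_(k < d) (bstar k - b k) * (x j w * x k w))).
  congr Ef; apply/funext => w; rewrite y_model /dotx.
  rewrite [X in x j w * X](_ : _ = eps w + \sum_(k < d) (bstar k - b k) * x k w).
    rewrite mulrDr mulr_sumr; congr (_ + _).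
    by apply: eq_bigr => k _; rewrite mulrCA.
  rewrite (addrC _ (eps w)) -addrA; congr (_ + _).
  by rewrite -sumrB; apply: eq_bigr => k _; rewrite mulrBl.
have Ixx k : Int P (fun w => x j w * x k w) by exact: L2_mul_Int.
rewrite EfD; first last.
- by apply: Int_sum => k; exact: IntZ.
- exact: L2_mul_Int eps_L2.
rewrite x_eps_orth add0r Ef_sum; last by move=> k; exact: IntZ.
by apply: eq_bigr => k _; rewrite EfZ // cov_x.
Qed.

Lemma risk_Ef (c : 'I_d -> R) : risk P x y c =
  (Ef P (fun w => (y w - dotx c x w) * (y w - dotx c x w)))%:E.
Proof.
rewrite /risk (_ : (fun w => _ ^+ 2) =
    (fun w => (y w - dotx c x w) * (y w - dotx c x w))); last first.
  by apply/funext => w; rewrite expr2.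
rewrite -EfE fineK //.
by apply: expectation_fin_num; apply: Lfun2_mul_Lfun1; exact: residual_L2.
Qed.

Lemma risk_along (b : 'I_d -> R) (i : 'I_d) (t : R) :
  risk P x y (fun k => b k + t * (k == i)%:R) =
  (Ef P (fun w => (y w - dotx b x w) * (y w - dotx b x w))
   - 2 * t * Zcoef P x y b i + t ^+ 2 * Ef P (fun w => x i w * x i w))%:E.
Proof.
have shift w : dotx (fun k => b k + t * (k == i)%:R) x w = dotx b x w + t * x i w.
  rewrite /dotx; under eq_bigr do rewrite mulrDl.
  rewrite big_split /=; congr (_ + _).
  rewrite (bigD1 i) //= eqxx mulr1 big1 ?addr0 // => k /negbTE ->.
  by rewrite mulr0 mul0r.
pose r w := y w - dotx b x w.
have Irr : Int P (fun w => r w * r w) :=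
  L2_mul_Int (residual_L2 b) (residual_L2 b).
have Ixr : Int P (fun w => x i w * r w) := L2_mul_Int (x_L2 i) (residual_L2 b).
have Ixx : Int P (fun w => x i w * x i w) := L2_mul_Int (x_L2 i) (x_L2 i).
rewrite risk_Ef (_ : (fun w => _) = fun w =>
    r w * r w + - (2 * t) * (x i w * r w) + t ^+ 2 * (x i w * x i w)).
  rewrite (EfD (IntD Irr (IntZ _ Ixr)) (IntZ _ Ixx)) (EfD Irr (IntZ _ Ixr)).
  rewrite !EfZ //.
  by rewrite /Zcoef EfE mulNr.
by apply/funext => w; rewrite /r shift; ring.
Qed.

Lemma Zcoef_first_order (S : {set 'I_d}) (b : 'I_d -> R) (i : 'I_d) :
  supp b \subset S ->
  (forall b' : 'I_d -> R, supp b' \subset S -> (risk P x y b <= risk P x y b')%E) ->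
  i \in S -> Zcoef P x y b i = 0.
Proof.
move=> sbS b_min iS.
apply: (linear_le_quadratic_eq0 (q := Ef P (fun w => x i w * x i w))).
  by apply: Ef_ge0 => w; rewrite -expr2 sqr_ge0.
move=> t; have sb' : supp (fun k => b k + t * (k == i)%:R) \subset S.
  apply/fintype.subsetP => k; rewrite !inE.
  case: (eqVneq k i) => [-> _ //|ki]; rewrite mulr0 addr0 => bk.
  by apply: (fintype.subsetP sbS); rewrite inE.
have := b_min _ sb'; rewrite risk_along risk_Ef lee_fin => h; lra.
Qed.

Definition diff_col (F : {set 'I_d}) (b : 'I_d -> R) : 'cV[R]_#|F| :=
  \col_i (bstar (enum_val i) - b (enum_val i)).

Lemma Zcoef_covF (F : {set 'I_d}) (b : 'I_d -> R) (j : 'I_d) :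
  supp bstar \subset F -> supp b \subset F ->
  Zcoef P x y b j = ((covF P x F j)^T *m diff_col F b) ord0 ord0.
Proof.
move=> sbF sF.
have vanish k : k \notin F -> bstar k - b k = 0.
  move=> kF; have bs0 : bstar k = 0.
    by apply/eqP; apply: contraNT kF => h; apply: (fintype.subsetP sbF); rewrite inE.
  have b0 : b k = 0.
    by apply/eqP; apply: contraNT kF => h; apply: (fintype.subsetP sF); rewrite inE.
  by rewrite bs0 b0 subrr.
rewrite Zcoef_cov (bigID (fun k => k \in F)) /= [X in _ + X]big1; last first.
  by move=> k /vanish ->; rewrite mul0r.
rewrite addr0 (big_enum_val (fun k => (bstar k - b k) * fine (covariance P (x j) (x k)))).
by rewrite mxE; apply: eq_bigr => k _; rewrite !mxE covarianceC mulrC.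
Qed.

Lemma SigmaF_sym (F : {set 'I_d}) : (SigmaF P x F)^T = SigmaF P x F.
Proof. by apply/matrixP => i k; rewrite !mxE covarianceC. Qed.

Lemma Zcoef_dual (F : {set 'I_d}) (b : 'I_d -> R) (j : 'I_d) :
  supp bstar \subset F -> supp b \subset F -> SigmaF P x F \in unitmx ->
  Zcoef P x y b j = \sum_(k < #|F|)
    (invmx (SigmaF P x F) *m covF P x F j) k ord0 * Zcoef P x y b (enum_val k).
Proof.
move=> sbF sF Sig_unit.
have gram : \col_k Zcoef P x y b (enum_val k) = SigmaF P x F *m diff_col F b.
  apply/colP => k; rewrite mxE (Zcoef_covF _ sbF sF) !mxE.
  by apply: eq_bigr => l _; rewrite ?mxE covarianceC.
rewrite (Zcoef_covF _ sbF sF) (sym_dual_repr _ _ (SigmaF_sym F) Sig_unit).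
by rewrite -gram mxE; apply: eq_bigr => k _; rewrite !mxE.
Qed.

End linear_model.

Theorem lemma1 (dT : measure_display) (T : measurableType dT) (R : realType)
  (P : probability T R) (d : nat) (x : 'I_d -> T -> R) (y : T -> R)
  (bstar : 'I_d -> R) (eps : T -> R) :
  (forall i, x i \in Lfun P 2) -> y \in Lfun P 2 ->
  (forall i, ('E_P[x i])%E = 0%E) ->
  (forall w, y w = dotx bstar x w + eps w) ->
  cond_exp_zero P x eps ->
  irrepresentable P x #|supp bstar| ->
  forall (S : {set 'I_d}) (b : 'I_d -> R),
    S \subset supp bstar ->
    supp b \subset S ->
    (forall b' : 'I_d -> R, supp b' \subset S ->
       (risk P x y b <= risk P x y b')%E) ->
    \big[Num.max/0]_(j | j \notin supp bstar) `|Zcoef P x y b j|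
      <= muF P x (supp bstar)
         * \big[Num.max/0]_(i in supp bstar :\: S) `|Zcoef P x y b i|.
Proof.
move=> x_L2 y_L2 x_centered y_model eps_cond irr S b sS sb b_min.
set F := supp bstar; set Z := Zcoef P x y b.
have [Sig_unit /andP[mu_ge0 _]] := irr F erefl.
set M := \big[Num.max/0]_(i in F :\: S) `|Z i|.
have M_ge0 : 0 <= M by rewrite /M bigmax_idl le_max lexx.
have Z_le_M (k : 'I_#|F|) : `|Z (enum_val k)| <= M.
  case: (boolP (enum_val k \in S)) => kS.
    by rewrite /Z (Zcoef_first_order x_L2 y_L2 sb b_min kS) normr0.
  apply: (le_bigmax_cond _ (fun i => `|Z i|)).
  by rewrite finset.in_setD kS /=; exact: enum_valP.
apply: bigmax_le => [|j jF]; first by rewrite mulr_ge0.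
rewrite /Z (Zcoef_dual x_L2 y_L2 x_centered y_model eps_cond _ (subxx F)
  (fintype.subset_trans sb sS) Sig_unit).
apply: le_trans (abs_dot_le_l1_max _ Z_le_M) _; rewrite ler_wpM2r //.
exact: (le_bigmax_cond _ (fun j => \sum_(k < #|F|)
  `|(invmx (SigmaF P x F) *m covF P x F j) k ord0|) jF).
Qed.
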